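(* Let $S\subset\mathbb{R}^3$ be a $C^3$ surface and let $\Gamma$ be a closed asymptotic curve of $S$ contained in the region $\{K<0\}$. Let $(x,t)\in[0,x_0)\times[0,t_0)$ be a semi-global coordinate system near $\Gamma$ (periodic in $x$ with period $x_0$) such that $\{t=0\}$ is $\Gamma$ and each curve $\{t=\mathrm{const}\}$ is a closed curve homotopic to $\Gamma$, and write the second fundamental form as $II=L\,dx^2+2M\,dx\,dt+N\,dt^2$ (so $L(x,0)=0$ and $M(x,0)\neq0$). Then $$\int_{0}^{x_{0}}M^{-1}\,\partial_{t}L(x,0)\,dx=\pm\int_{\Gamma}k_{g}k_{n}|K|^{-1/2}\,ds,$$ where the sign is fixed (determined by the sign of $M$ along $\Gamma$).
   Context: $K$ is Gaussian curvature. An asymptotic curve is a curve whose tangent direction has zero normal curvature at every point. $k_g$ is the geodesic curvature of $\Gamma$, $k_n$ is the normal curvature of $S$ in the direction tangent to $S$ and perpendicular to $\Gamma$, and $ds$ is arclength along $\Gamma$. *)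

From Stdlib Require Import Reals Lra.
Open Scope R_scope.

Definition V3 : Type := (R * R * R)%type.
Definition vx (v : V3) : R := fst (fst v).
Definition vy (v : V3) : R := snd (fst v).
Definition vz (v : V3) : R := snd v.
Definition mkV (a b c : R) : V3 := (a, b, c).
Definition dot (u v : V3) : R := vx u * vx v + vy u * vy v + vz u * vz v.
Definition cross (u v : V3) : V3 :=
  mkV (vy u * vz v - vz u * vy v)
      (vz u * vx v - vx u * vz v)
      (vx u * vy v - vy u * vx v).
Definition scal (a : R) (v : V3) : V3 := mkV (a * vx v) (a * vy v) (a * vz v).
Definition vnorm (v : V3) : R := sqrt (dot v v).
Definition vzero : V3 := mkV 0 0 0.

Definition tdom (t0 t : R) : Prop := 0 <= t < t0.

(** derivative of a one-variable function relative to a subset P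
    (one-sided at boundary points such as t = 0) *)
Definition deriv_in (P : R -> Prop) (f : R -> R) (a l : R) : Prop :=
  forall eps, 0 < eps -> exists delta, 0 < delta /\
    forall h, h <> 0 -> Rabs h < delta -> P (a + h) ->
      Rabs ((f (a + h) - f a) / h - l) < eps.

Definition cont2 (t0 : R) (f : R -> R -> R) : Prop :=
  forall x t, tdom t0 t -> forall eps, 0 < eps -> exists delta, 0 < delta /\
    forall x' t', tdom t0 t' -> Rabs (x' - x) < delta -> Rabs (t' - t) < delta ->
      Rabs (f x' t' - f x t) < eps.

Definition is_px (t0 : R) (f g : R -> R -> R) : Prop :=
  forall x t, tdom t0 t -> derivable_pt_lim (fun y => f y t) x (g x t).
Definition is_pt (t0 : R) (f g : R -> R -> R) : Prop :=
  forall x t, tdom t0 t -> deriv_in (tdom t0) (fun s => f x s) t (g x t).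

Fixpoint Ck (k : nat) (t0 : R) (f : R -> R -> R) : Prop :=
  cont2 t0 f /\
  match k with
  | O => True
  | S k' => exists fx ft : R -> R -> R,
      is_px t0 f fx /\ is_pt t0 f ft /\ Ck k' t0 fx /\ Ck k' t0 ft
  end.

Definition Ck_v (k : nat) (t0 : R) (X : R -> R -> V3) : Prop :=
  Ck k t0 (fun x t => vx (X x t)) /\ Ck k t0 (fun x t => vy (X x t)) /\
  Ck k t0 (fun x t => vz (X x t)).
Definition is_px_v (t0 : R) (X Y : R -> R -> V3) : Prop :=
  is_px t0 (fun x t => vx (X x t)) (fun x t => vx (Y x t)) /\
  is_px t0 (fun x t => vy (X x t)) (fun x t => vy (Y x t)) /\
  is_px t0 (fun x t => vz (X x t)) (fun x t => vz (Y x t)).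
Definition is_pt_v (t0 : R) (X Y : R -> R -> V3) : Prop :=
  is_pt t0 (fun x t => vx (X x t)) (fun x t => vx (Y x t)) /\
  is_pt t0 (fun x t => vy (X x t)) (fun x t => vy (Y x t)) /\
  is_pt t0 (fun x t => vz (X x t)) (fun x t => vz (Y x t)).

Definition unormal (Xx Xt : V3) : V3 := scal (/ vnorm (cross Xx Xt)) (cross Xx Xt).

Definition ffE (Xx Xt : V3) : R := dot Xx Xx.
Definition ffF (Xx Xt : V3) : R := dot Xx Xt.
Definition ffG (Xx Xt : V3) : R := dot Xt Xt.

Definition sfL (Xx Xt Xxx : V3) : R := dot Xxx (unormal Xx Xt).
Definition sfM (Xx Xt Xxt : V3) : R := dot Xxt (unormal Xx Xt).
Definition sfN (Xx Xt Xtt : V3) : R := dot Xtt (unormal Xx Xt).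

Definition gaussK (Xx Xt Xxx Xxt Xtt : V3) : R :=
  (sfL Xx Xt Xxx * sfN Xx Xt Xtt - sfM Xx Xt Xxt ^ 2) /
  (ffE Xx Xt * ffG Xx Xt - ffF Xx Xt ^ 2).

(** normal curvature II(w,w)/I(w,w) in the tangent direction w = a X_x + b X_t *)
Definition normal_curv (Xx Xt Xxx Xxt Xtt : V3) (a b : R) : R :=
  (sfL Xx Xt Xxx * a ^ 2 + 2 * sfM Xx Xt Xxt * a * b + sfN Xx Xt Xtt * b ^ 2) /
  (ffE Xx Xt * a ^ 2 + 2 * ffF Xx Xt * a * b + ffG Xx Xt * b ^ 2).

(** normal curvature k_n in the tangent direction perpendicular to X_x:
    w = -F X_x + E X_t satisfies <w, X_x> = 0. *)
Definition kn_perp (Xx Xt Xxx Xxt Xtt : V3) : R :=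
  normal_curv Xx Xt Xxx Xxt Xtt (- ffF Xx Xt) (ffE Xx Xt).

(** geodesic curvature of a curve c with velocity c' and acceleration c''
    on the surface with unit normal n:  k_g = <c'', n x c'> / |c'|^3
    (i.e. k_g = <dT/ds, n x T>, T the unit tangent). *)
Definition geod_curv (c' c'' n : V3) : R := dot c'' (cross n c') / (vnorm c') ^ 3.

(** Write a = X_x, b = X_t, p = X_xx, q = X_xt, r = X_tt along Gamma = {t = 0},
    C = a x b, D = <q, C> = |C| M and E = <a, a>.  Since Gamma is asymptotic,
    L = <p, C>/|C| vanishes on Gamma, and K < 0 forces D <> 0 there.  A direct
    (purely algebraic) computation then shows, for sgn = sign M,
        M^{-1} dL/dt = Phi' - sgn * k_g k_n |K|^{-1/2} |a|,
    where Phi = ln |D| - ln E is a function of x alone.  Since X is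
    x0-periodic, so are a, b, q and hence Phi, so the integral of Phi' over a
    period vanishes, which gives the theorem. *)

From Stdlib Require Import Reals Lra FunctionalExtensionality.
From Coquelicot Require Import Coquelicot.
Open Scope R_scope.

(** ** One-sided derivatives on [0, t0) *)

(** A derivative relative to [0,t0) at a point of [0,t0) is unique
    (points t + h with small h > 0 always lie in the domain). *)
Lemma deriv_in_uniq t0 t f l1 l2 : tdom t0 t ->
  deriv_in (tdom t0) f t l1 -> deriv_in (tdom t0) f t l2 -> l1 = l2.
Proof.
  intros [Ht1 Ht2] H1 H2.
  destruct (Req_dec l1 l2) as [|Hn]; [assumption|exfalso].
  set (e := Rabs (l1 - l2) / 2).
  assert (He : 0 < e).
  { unfold e. assert (0 < Rabs (l1 - l2)) by (apply Rabs_pos_lt; intro; apply Hn; lra). lra. }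
  destruct (H1 e He) as [d1 [Hd1 P1]]. destruct (H2 e He) as [d2 [Hd2 P2]].
  set (h := Rmin (Rmin d1 d2) (t0 - t) / 2).
  assert (Hh0 : 0 < Rmin (Rmin d1 d2) (t0 - t)) by (repeat apply Rmin_pos; lra).
  pose proof (Rmin_l (Rmin d1 d2) (t0 - t)). pose proof (Rmin_r (Rmin d1 d2) (t0 - t)).
  pose proof (Rmin_l d1 d2). pose proof (Rmin_r d1 d2).
  assert (Hh : 0 < h /\ h < d1 /\ h < d2 /\ h < t0 - t) by (unfold h; lra).
  assert (Ha : Rabs h = h) by (apply Rabs_right; lra).
  assert (Hp : tdom t0 (t + h)) by (split; lra).
  specialize (P1 h ltac:(lra) ltac:(lra) Hp). specialize (P2 h ltac:(lra) ltac:(lra) Hp).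
  set (q := (f (t + h) - f t) / h) in *.
  assert (Rabs (l1 - l2) <= Rabs (q - l2) + Rabs (q - l1)).
  { replace (l1 - l2) with ((q - l2) - (q - l1)) by ring.
    eapply Rle_trans; [apply Rabs_triang|]. rewrite Rabs_Ropp. lra. }
  unfold e in *. lra.
Qed.

Lemma deriv_in_interior t0 t f l : 0 < t < t0 ->
  deriv_in (tdom t0) f t l -> derivable_pt_lim f t l.
Proof.
  intros Ht H eps Heps. destruct (H eps Heps) as [d [Hd P]].
  assert (Hm : 0 < Rmin d (Rmin t (t0 - t))) by (repeat apply Rmin_pos; lra).
  exists (mkposreal _ Hm). simpl. intros h Hh Hlt.
  pose proof (Rmin_l d (Rmin t (t0 - t))). pose proof (Rmin_r d (Rmin t (t0 - t))).
  pose proof (Rmin_l t (t0 - t)). pose proof (Rmin_r t (t0 - t)).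
  apply P; auto; [lra|]. apply Rabs_def2 in Hlt. split; lra.
Qed.

Lemma deriv_in_ext t0 t f g l : (forall s, tdom t0 s -> f s = g s) -> tdom t0 t ->
  deriv_in (tdom t0) f t l -> deriv_in (tdom t0) g t l.
Proof.
  intros He Ht H eps Heps. destruct (H eps Heps) as [d [Hd P]]. exists d; split; auto.
  intros h Hh Hl Hp. rewrite <- !He; auto.
Qed.

(** The affine extension of f to s < 0 with slope l; if l is the one-sided
    derivative of f at 0, it becomes a two-sided derivative of the extension. *)
Definition extend_left (f : R -> R) (l : R) : R -> R :=
  fun s => if Rlt_dec s 0 then f 0 + l * s else f s.

Lemma extend_left_eq f l s : 0 <= s -> extend_left f l s = f s.
Proof. intros; unfold extend_left; destruct (Rlt_dec s 0); lra || reflexivity. Qed.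

Lemma extend_left_deriv t0 f l : 0 < t0 ->
  deriv_in (tdom t0) f 0 l -> derivable_pt_lim (extend_left f l) 0 l.
Proof.
  intros Ht H eps Heps. destruct (H eps Heps) as [d [Hd P]].
  assert (Hm : 0 < Rmin d t0) by (apply Rmin_pos; lra).
  exists (mkposreal _ Hm). simpl. intros h Hh Hlt.
  pose proof (Rmin_l d t0). pose proof (Rmin_r d t0).
  unfold extend_left. destruct (Rlt_dec 0 0); [lra|].
  destruct (Rlt_dec (0 + h) 0).
  - replace ((f 0 + l * (0 + h) - f 0) / h - l) with 0 by (field; auto).
    rewrite Rabs_R0; lra.
  - apply P; auto; [lra|]. apply Rabs_def2 in Hlt. split; lra.
Qed.

Lemma deriv_in_of_derivable t0 f g l : 0 < t0 -> derivable_pt_lim g 0 l ->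
  (forall s, tdom t0 s -> g s = f s) -> deriv_in (tdom t0) f 0 l.
Proof.
  intros Ht H He eps Heps. destruct (H eps Heps) as [d P]. exists d; split; [apply cond_pos|].
  intros h Hh Hl Hp. rewrite <- !He; [apply P; auto| |]; auto. split; lra.
Qed.

Lemma uniq_px t0 f g1 g2 : is_px t0 f g1 -> is_px t0 f g2 ->
  forall x t, tdom t0 t -> g1 x t = g2 x t.
Proof. intros H1 H2 x t Ht. eapply uniqueness_limite; [apply H1|apply H2]; auto. Qed.

Lemma uniq_pt t0 f g1 g2 : is_pt t0 f g1 -> is_pt t0 f g2 ->
  forall x t, tdom t0 t -> g1 x t = g2 x t.
Proof. intros H1 H2 x t Ht. eapply deriv_in_uniq; [eauto|apply H1|apply H2]; auto. Qed.

Lemma px_ext t0 f1 f2 g : (forall x t, tdom t0 t -> f1 x t = f2 x t) ->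
  is_px t0 f1 g -> is_px t0 f2 g.
Proof.
  intros He H x t Ht. replace (fun y => f2 y t) with (fun y => f1 y t); [apply H; auto|].
  apply functional_extensionality. intros; apply He; auto.
Qed.

Lemma pt_ext t0 f1 f2 g : (forall x t, tdom t0 t -> f1 x t = f2 x t) ->
  is_pt t0 f1 g -> is_pt t0 f2 g.
Proof. intros He H x t Ht. eapply deriv_in_ext; [|eauto|apply H; auto]. intros; apply He; auto. Qed.

Lemma cont2_ext t0 f g : (forall x t, tdom t0 t -> f x t = g x t) -> cont2 t0 f -> cont2 t0 g.
Proof.
  intros He H x t Ht eps Heps. destruct (H x t Ht eps Heps) as [d [Hd P]]. exists d; split; auto.
  intros x' t' Ht' H1 H2. rewrite <- !He; auto.
Qed.

Lemma cont2_boundary t0 f : 0 < t0 -> cont2 t0 f -> continuity (fun x => f x 0).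
Proof.
  intros Ht H x. unfold continuity_pt, continue_in, limit1_in, limit_in; simpl; unfold R_dist.
  intros eps Heps. assert (Hd : tdom t0 0) by (split; lra).
  destruct (H x 0 Hd eps Heps) as [d [Hd0 P]]. exists d; split; auto.
  intros y [_ Hy]. apply P; auto. rewrite Rminus_0_r, Rabs_R0; auto.
Qed.

(** Schwarz lemma on the boundary of the strip: if the mixed partials f_xt and
    f_tx exist and are continuous, they agree at t = 0.  Both are limits of
    the same second difference quotient, by two applications of the MVT. *)
Lemma schwarz_boundary t0 f fx ft fxt ftx : 0 < t0 -> is_px t0 f fx -> is_pt t0 f ft ->
  is_pt t0 fx fxt -> is_px t0 ft ftx -> cont2 t0 fxt -> cont2 t0 ftx ->
  forall x, fxt x 0 = ftx x 0.
Proof.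
  intros Ht0 Hfx Hft Hfxt Hftx C1 C2 x.
  assert (Hd0 : tdom t0 0) by (split; lra).
  apply cond_eq. intros eps Heps.
  assert (He2 : 0 < eps / 2) by lra.
  destruct (C1 x 0 Hd0 _ He2) as [d1 [Hd1 P1]].
  destruct (C2 x 0 Hd0 _ He2) as [d2 [Hd2 P2]].
  set (a := Rmin (Rmin d1 d2) t0 / 4).
  assert (Hm : 0 < Rmin (Rmin d1 d2) t0) by (repeat apply Rmin_pos; lra).
  pose proof (Rmin_l (Rmin d1 d2) t0). pose proof (Rmin_r (Rmin d1 d2) t0).
  pose proof (Rmin_l d1 d2). pose proof (Rmin_r d1 d2).
  assert (Ha : 0 < a /\ 2 * a < d1 /\ 2 * a < d2 /\ 2 * a < t0) by (unfold a; lra).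
  (* the second difference, differentiated first in x, then in t *)
  destruct (MVT_cor2 (fun s => f s (2*a) - f s a) (fun s => fx s (2*a) - fx s a) x (x + a))
    as [xi [E1 Hxi]]; [lra| |].
  { intros c _. apply derivable_pt_lim_minus; apply Hfx; split; lra. }
  destruct (MVT_cor2 (fun t => fx xi t) (fun t => fxt xi t) a (2 * a)) as [eta [E2 Heta]]; [lra| |].
  { intros c Hc. apply (deriv_in_interior t0); [lra|]. apply Hfxt. split; lra. }
  (* the same second difference, differentiated first in t, then in x *)
  destruct (MVT_cor2 (fun t => f (x + a) t - f x t) (fun t => ft (x + a) t - ft x t) a (2 * a))
    as [eta' [E3 Heta']]; [lra| |].
  { intros c Hc. apply derivable_pt_lim_minus; apply (deriv_in_interior t0); try lra;
    apply Hft; split; lra. }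
  destruct (MVT_cor2 (fun s => ft s eta') (fun s => ftx s eta') x (x + a)) as [xi' [E4 Hxi']]; [lra| |].
  { intros c _. apply Hftx. split; lra. }
  simpl in *.
  assert (Eq : fxt xi eta = ftx xi' eta').
  { assert (Hk : fxt xi eta * (a * a) = ftx xi' eta' * (a * a)).
    { replace (fxt xi eta * (a * a)) with ((fx xi (2 * a) - fx xi a) * (x + a - x))
        by (rewrite E2; ring).
      rewrite <- E1.
      replace (ftx xi' eta' * (a * a)) with ((ft (x + a) eta' - ft x eta') * (2 * a - a))
        by (rewrite E4; ring).
      rewrite <- E3. ring. }
    apply Rmult_eq_reg_r in Hk; auto. nra. }
  assert (Q1 : Rabs (fxt xi eta - fxt x 0) < eps / 2).
  { apply P1; [split; lra| |]; apply Rabs_def1; lra. }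
  assert (Q2 : Rabs (ftx xi' eta' - ftx x 0) < eps / 2).
  { apply P2; [split; lra| |]; apply Rabs_def1; lra. }
  rewrite Eq in Q1.
  replace (fxt x 0 - ftx x 0) with ((ftx xi' eta' - ftx x 0) - (ftx xi' eta' - fxt x 0)) by ring.
  eapply Rle_lt_trans; [apply Rabs_triang|]. rewrite Rabs_Ropp. lra.
Qed.

Lemma boundary_partials t0 f Fx Ft Fxx Fxt Ftt : 0 < t0 -> Ck 3 t0 f ->
  is_px t0 f Fx -> is_pt t0 f Ft -> is_px t0 Fx Fxx -> is_pt t0 Fx Fxt -> is_pt t0 Ft Ftt ->
  continuity (fun x => Fxx x 0) /\
  (forall x, derivable_pt_lim (fun y => Ft y 0) x (Fxt x 0)) /\
  exists g, continuity g /\ (forall x, derivable_pt_lim (fun y => Fxt y 0) x (g x)) /\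
    (forall x, deriv_in (tdom t0) (fun s => Fxx x s) 0 (g x)).
Proof.
  intros Ht0 HC HFx HFt HFxx HFxt HFtt.
  destruct HC as [Cf [fx [ft [Hpx [Hpt [Ck2x Ck2t]]]]]].
  destruct Ck2x as [Cfx [fxx [fxt [Hpxx [Hpxt [Ck1xx Ck1xt]]]]]].
  destruct Ck1xx as [Cfxx [fxxx [fxxt [_ [Hpxxt [_ [Cfxxt _]]]]]]].
  destruct Ck1xt as [Cfxt [fxtx [fxtt [Hpxtx [_ [[Cfxtx _] _]]]]]].
  destruct Ck2t as [Cft [ftx [ftt [Hptx [_ [[Cftx _] _]]]]]].
  (* the partials from the C^3 hypothesis coincide with the given ones *)
  pose proof (uniq_px _ _ _ _ Hpx HFx) as Ex.
  pose proof (uniq_pt _ _ _ _ Hpt HFt) as Et.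
  pose proof (uniq_px _ _ _ _ (px_ext _ _ _ _ Ex Hpxx) HFxx) as Exx.
  pose proof (uniq_pt _ _ _ _ (pt_ext _ _ _ _ Ex Hpxt) HFxt) as Ext.
  pose proof (pt_ext _ _ _ _ Exx Hpxxt) as Hpxxt'.
  pose proof (px_ext _ _ _ _ Ext Hpxtx) as Hpxtx'.
  pose proof (px_ext _ _ _ _ Et Hptx) as Hptx'.
  assert (S1 := schwarz_boundary _ _ _ _ _ _ Ht0 HFxx HFxt Hpxxt' Hpxtx' Cfxxt Cfxtx).
  assert (S2 := schwarz_boundary _ _ _ _ _ _ Ht0 HFx HFt HFxt Hptx' (cont2_ext _ _ _ Ext Cfxt) Cftx).
  assert (Hd0 : tdom t0 0) by (split; lra).
  split; [exact (cont2_boundary t0 _ Ht0 (cont2_ext _ _ _ Exx Cfxx))|]. split.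
  { intros x. rewrite S2. apply Hptx'; auto. }
  exists (fun x => fxtx x 0). split; [apply (cont2_boundary t0); auto|]. split.
  - intros x. apply Hpxtx'; auto.
  - intros x. rewrite <- S1. apply Hpxxt'; auto.
Qed.

(** ** Differential calculus of real functions and of curves in R^3 *)

(** Pointwise forms of the Stdlib derivative rules (lambda-terms instead of
    the combinators of [Ranalysis]). *)
Lemma D_eq f x l l' : derivable_pt_lim f x l -> l = l' -> derivable_pt_lim f x l'.
Proof. intros H ->; auto. Qed.
Lemma D_minus f g x l m : derivable_pt_lim f x l -> derivable_pt_lim g x m ->
  derivable_pt_lim (fun y => f y - g y) x (l - m).
Proof. intros; apply (derivable_pt_lim_minus f g); auto. Qed.
Lemma D_plus f g x l m : derivable_pt_lim f x l -> derivable_pt_lim g x m ->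
  derivable_pt_lim (fun y => f y + g y) x (l + m).
Proof. intros; apply (derivable_pt_lim_plus f g); auto. Qed.
Lemma D_mult f g x l m : derivable_pt_lim f x l -> derivable_pt_lim g x m ->
  derivable_pt_lim (fun y => f y * g y) x (l * g x + f x * m).
Proof. intros; apply (derivable_pt_lim_mult f g); auto. Qed.
Lemma D_scal c f x l : derivable_pt_lim f x l -> derivable_pt_lim (fun y => c * f y) x (c * l).
Proof. intros H. apply (derivable_pt_lim_scal f c x l H). Qed.
Lemma D_inv f x l : derivable_pt_lim f x l -> f x <> 0 ->
  derivable_pt_lim (fun y => / f y) x (- l / (f x)^2).
Proof.
  intros H Hn. replace (fun y => / f y) with (fct_cte 1 / f)%F.
  2:{ apply functional_extensionality; intros y; unfold fct_cte, div_fct, Rdiv; ring. }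
  eapply D_eq.
  - apply (derivable_pt_lim_div (fct_cte 1) f x 0 l); auto. apply derivable_pt_lim_const.
  - unfold fct_cte, Rsqr. field; auto.
Qed.
Lemma D_sqrt f x l : derivable_pt_lim f x l -> 0 < f x ->
  derivable_pt_lim (fun y => sqrt (f y)) x (/ (2 * sqrt (f x)) * l).
Proof. intros H Hp. apply (derivable_pt_lim_comp f sqrt); auto. apply derivable_pt_lim_sqrt; auto. Qed.
Lemma D_ln f x l : derivable_pt_lim f x l -> 0 < f x ->
  derivable_pt_lim (fun y => ln (f y)) x (/ (f x) * l).
Proof. intros H Hp. apply (derivable_pt_lim_comp f ln); auto. apply derivable_pt_lim_ln; auto. Qed.

Lemma C_plus f g x : continuity_pt f x -> continuity_pt g x -> continuity_pt (fun y => f y + g y) x.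
Proof. intros; apply (continuity_pt_plus f g); auto. Qed.
Lemma C_minus f g x : continuity_pt f x -> continuity_pt g x -> continuity_pt (fun y => f y - g y) x.
Proof. intros; apply (continuity_pt_minus f g); auto. Qed.
Lemma C_mult f g x : continuity_pt f x -> continuity_pt g x -> continuity_pt (fun y => f y * g y) x.
Proof. intros; apply (continuity_pt_mult f g); auto. Qed.
Lemma C_div f g x : continuity_pt f x -> continuity_pt g x -> g x <> 0 -> continuity_pt (fun y => f y / g y) x.
Proof. intros; apply (continuity_pt_div f g); auto. Qed.
Lemma C_const c x : continuity_pt (fun _ => c) x.
Proof. apply (continuity_pt_const (fun _ => c)). intros ? ?; reflexivity. Qed.

Definition vplus (u v : V3) : V3 := mkV (vx u + vx v) (vy u + vy v) (vz u + vz v).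

Lemma v3_eq (u v : V3) : vx u = vx v -> vy u = vy v -> vz u = vz v -> u = v.
Proof. destruct u as [[? ?] ?], v as [[? ?] ?]; unfold vx, vy, vz; simpl; intros; subst; auto. Qed.

Definition dvec (u : R -> V3) (x : R) (u' : V3) : Prop :=
  derivable_pt_lim (fun y => vx (u y)) x (vx u') /\
  derivable_pt_lim (fun y => vy (u y)) x (vy u') /\
  derivable_pt_lim (fun y => vz (u y)) x (vz u').

Definition cvec (u : R -> V3) (x : R) : Prop :=
  continuity_pt (fun y => vx (u y)) x /\ continuity_pt (fun y => vy (u y)) x /\
  continuity_pt (fun y => vz (u y)) x.

Definition dvec_in (t0 : R) (u : R -> V3) (u' : V3) : Prop :=
  deriv_in (tdom t0) (fun s => vx (u s)) 0 (vx u') /\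
  deriv_in (tdom t0) (fun s => vy (u s)) 0 (vy u') /\
  deriv_in (tdom t0) (fun s => vz (u s)) 0 (vz u').

Lemma dvec_dot u v x u' v' : dvec u x u' -> dvec v x v' ->
  derivable_pt_lim (fun y => dot (u y) (v y)) x (dot u' (v x) + dot (u x) v').
Proof.
  intros [H1 [H2 H3]] [G1 [G2 G3]]. unfold dot. eapply D_eq.
  - apply D_plus; [apply D_plus|]; apply D_mult; eauto.
  - cbv beta; ring.
Qed.

Lemma dvec_cross u v x u' v' : dvec u x u' -> dvec v x v' ->
  dvec (fun y => cross (u y) (v y)) x (vplus (cross u' (v x)) (cross (u x) v')).
Proof.
  intros [H1 [H2 H3]] [G1 [G2 G3]]. unfold cross, vplus, mkV, vx, vy, vz in *; simpl.
  repeat split; (eapply D_eq; [apply D_minus; apply D_mult; eauto| ]).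
  all: unfold vx, vy, vz; cbv beta; simpl; ring.
Qed.

Lemma cvec_dot u v x : cvec u x -> cvec v x -> continuity_pt (fun y => dot (u y) (v y)) x.
Proof. intros [? [? ?]] [? [? ?]]. unfold dot. repeat apply C_plus; apply C_mult; auto. Qed.

Lemma cvec_cross u v x : cvec u x -> cvec v x -> cvec (fun y => cross (u y) (v y)) x.
Proof.
  intros [? [? ?]] [? [? ?]]. unfold cross, mkV, vx, vy, vz in *; simpl.
  repeat split; apply C_minus; apply C_mult; auto.
Qed.

Lemma cvec_vplus u v x : cvec u x -> cvec v x -> cvec (fun y => vplus (u y) (v y)) x.
Proof.
  intros [? [? ?]] [? [? ?]]. unfold vplus, mkV, vx, vy, vz in *; simpl.
  repeat split; apply C_plus; auto.
Qed.

Lemma dvec_cvec u x u' : dvec u x u' -> cvec u x.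
Proof.
  intros [H1 [H2 H3]]; repeat split; eapply derivable_continuous_pt; eexists; eauto.
Qed.

Definition extend_left_v (u : R -> V3) (u' : V3) : R -> V3 :=
  fun s => mkV (extend_left (fun s => vx (u s)) (vx u') s)
               (extend_left (fun s => vy (u s)) (vy u') s)
               (extend_left (fun s => vz (u s)) (vz u') s).

Lemma extend_left_v_eq u u' s : 0 <= s -> extend_left_v u u' s = u s.
Proof. intros Hs. apply v3_eq; unfold extend_left_v; simpl; apply extend_left_eq; auto. Qed.

Lemma extend_left_v_deriv t0 u u' : 0 < t0 -> dvec_in t0 u u' -> dvec (extend_left_v u u') 0 u'.
Proof. intros Ht [H1 [H2 H3]]. split; [|split]; eapply extend_left_deriv; eauto. Qed.

Lemma is_pt_v_boundary t0 U V y : 0 < t0 -> is_pt_v t0 U V -> dvec_in t0 (fun s => U y s) (V y 0).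
Proof. intros Ht [H1 [H2 H3]]. repeat split; [apply H1|apply H2|apply H3]; split; lra. Qed.

Lemma shift_deriv f x c l : derivable_pt_lim f (x + c) l -> derivable_pt_lim (fun y => f (y + c)) x l.
Proof.
  intros H eps Heps. destruct (H eps Heps) as [d P]. exists d. intros h Hh Hl.
  replace (x + h + c) with (x + c + h) by ring. apply P; auto.
Qed.

Lemma per_px t0 x0 f g : (forall x t, tdom t0 t -> f (x + x0) t = f x t) -> is_px t0 f g ->
  forall x t, tdom t0 t -> g (x + x0) t = g x t.
Proof.
  intros Hp H x t Ht.
  assert (H1 := shift_deriv (fun y => f y t) x x0 _ (H (x + x0) t Ht)). cbv beta in H1.
  replace (fun y => f (y + x0) t) with (fun y => f y t) in H1.
  2:{ apply functional_extensionality; intros; rewrite Hp; auto. }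
  eapply uniqueness_limite; [exact H1| apply H; auto].
Qed.

Lemma per_pt t0 x0 f g : (forall x t, tdom t0 t -> f (x + x0) t = f x t) -> is_pt t0 f g ->
  forall x t, tdom t0 t -> g (x + x0) t = g x t.
Proof.
  intros Hp H x t Ht. eapply deriv_in_uniq; [exact Ht|apply H; auto|].
  eapply deriv_in_ext; [|exact Ht|apply (H x t Ht)]. intros s Hs; rewrite Hp; auto.
Qed.

Lemma per_px_v t0 x0 (X Y : R -> R -> V3) :
  (forall x t, tdom t0 t -> X (x + x0) t = X x t) -> is_px_v t0 X Y ->
  forall x t, tdom t0 t -> Y (x + x0) t = Y x t.
Proof.
  intros Hp [H1 [H2 H3]] x t Ht.
  apply v3_eq;
    [apply (per_px t0 x0 (fun x t => vx (X x t)) (fun x t => vx (Y x t)))|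
     apply (per_px t0 x0 (fun x t => vy (X x t)) (fun x t => vy (Y x t)))|
     apply (per_px t0 x0 (fun x t => vz (X x t)) (fun x t => vz (Y x t)))]; auto;
    intros; rewrite Hp; auto.
Qed.

Lemma per_pt_v t0 x0 (X Y : R -> R -> V3) :
  (forall x t, tdom t0 t -> X (x + x0) t = X x t) -> is_pt_v t0 X Y ->
  forall x t, tdom t0 t -> Y (x + x0) t = Y x t.
Proof.
  intros Hp [H1 [H2 H3]] x t Ht.
  apply v3_eq;
    [apply (per_pt t0 x0 (fun x t => vx (X x t)) (fun x t => vx (Y x t)))|
     apply (per_pt t0 x0 (fun x t => vy (X x t)) (fun x t => vy (Y x t)))|
     apply (per_pt t0 x0 (fun x t => vz (X x t)) (fun x t => vz (Y x t)))]; auto;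
    intros; rewrite Hp; auto.
Qed.

Lemma periodic_boundary_frame t0 x0 (X Xx Xt Xxt : R -> R -> V3) : 0 < t0 ->
  (forall x t, tdom t0 t -> X (x + x0) t = X x t) ->
  is_px_v t0 X Xx -> is_pt_v t0 X Xt -> is_pt_v t0 Xx Xxt ->
  Xx x0 0 = Xx 0 0 /\ Xt x0 0 = Xt 0 0 /\ Xxt x0 0 = Xxt 0 0.
Proof.
  intros Ht Hp HXx HXt HXxt.
  assert (Hd0 : tdom t0 0) by (split; lra).
  pose proof (per_px_v _ _ _ _ Hp HXx) as PXx.
  rewrite <- (Rplus_0_l x0). repeat split.
  - apply PXx, Hd0.
  - apply (per_pt_v _ _ _ _ Hp HXt), Hd0.
  - apply (per_pt_v _ _ _ _ PXx HXxt), Hd0.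
Qed.

(** ** Vector algebra and the fundamental forms *)

Lemma dot_comm u v : dot u v = dot v u.
Proof. unfold dot; ring. Qed.
Lemma dot_scal_r u k v : dot u (scal k v) = k * dot u v.
Proof. unfold dot, scal, mkV, vx, vy, vz; simpl; ring. Qed.
Lemma dot_cross_scal p k u v : dot p (cross (scal k u) v) = k * dot p (cross u v).
Proof. unfold dot, cross, scal, mkV, vx, vy, vz; simpl; ring. Qed.
Lemma lagrange a b : dot (cross a b) (cross a b) = dot a a * dot b b - (dot a b)^2.
Proof. unfold dot, cross, mkV, vx, vy, vz; simpl; ring. Qed.
Lemma dot_nonneg u : 0 <= dot u u.
Proof. unfold dot. nra. Qed.
Lemma dot_pos u : u <> vzero -> 0 < dot u u.
Proof.
  intros H. destruct (dot_nonneg u) as [|H0]; auto. exfalso. apply H.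
  destruct u as [[u1 u2] u3]. unfold dot, vx, vy, vz in H0; simpl in H0.
  assert (u1 = 0) by nra. assert (u2 = 0) by nra. assert (u3 = 0) by nra. subst. reflexivity.
Qed.

Lemma ffE_pos a b : cross a b <> vzero -> 0 < dot a a.
Proof.
  intros H. pose proof (dot_pos _ H) as HS. rewrite lagrange in HS.
  assert (H0 : 0 <= dot a a) by apply dot_nonneg. pose proof (dot_nonneg b).
  destruct H0 as [|H0]; auto. rewrite <- H0 in HS. nra.
Qed.
Lemma vnorm_cross_pos a b : cross a b <> vzero -> 0 < vnorm (cross a b).
Proof. intros H; apply sqrt_lt_R0, dot_pos; auto. Qed.

Lemma sfL_eq a b p : sfL a b p = dot p (cross a b) * / vnorm (cross a b).
Proof. unfold sfL, unormal. rewrite dot_scal_r. ring. Qed.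
Lemma sfM_eq a b q : sfM a b q = dot q (cross a b) * / vnorm (cross a b).
Proof. unfold sfM, unormal. rewrite dot_scal_r. ring. Qed.

Lemma asymptotic_L_zero a b p q r : cross a b <> vzero -> normal_curv a b p q r 1 0 = 0 ->
  dot p (cross a b) = 0.
Proof.
  intros HC H. unfold normal_curv, ffE in H.
  pose proof (ffE_pos _ _ HC). pose proof (vnorm_cross_pos _ _ HC).
  replace ((sfL a b p * 1 ^ 2 + 2 * sfM a b q * 1 * 0 + sfN a b r * 0 ^ 2) /
    (dot a a * 1 ^ 2 + 2 * ffF a b * 1 * 0 + ffG a b * 0 ^ 2)) with (sfL a b p / dot a a) in H
    by (field; lra).
  rewrite sfL_eq in H.
  apply Rmult_eq_reg_r with (/ vnorm (cross a b) / dot a a).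
  - unfold Rdiv in *. rewrite Rmult_0_l. rewrite <- H. ring.
  - apply Rgt_not_eq. apply Rdiv_lt_0_compat; [apply Rinv_0_lt_compat|]; lra.
Qed.

(** Where L = 0 we have K = -M^2/(EG - F^2), so K < 0 forces M <> 0. *)
Lemma negative_K_M_nonzero a b p q r : dot p (cross a b) = 0 ->
  gaussK a b p q r < 0 -> dot q (cross a b) <> 0.
Proof.
  intros HL HK HD. unfold gaussK in HK. rewrite (sfL_eq a b p), (sfM_eq a b q) in HK. rewrite HD, HL in HK.
  replace ((0 * / vnorm (cross a b) * sfN a b r - (0 * / vnorm (cross a b)) ^ 2) /
     (ffE a b * ffG a b - ffF a b ^ 2)) with 0 in HK by (unfold Rdiv; ring). lra.
Qed.

Lemma sign_sfM a b q s : cross a b <> vzero -> 0 < s * sfM a b q -> 0 < s * dot q (cross a b).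
Proof.
  intros HC H. rewrite sfM_eq in H. pose proof (vnorm_cross_pos _ _ HC).
  replace (s * dot q (cross a b)) with (s * (dot q (cross a b) * / vnorm (cross a b)) * vnorm (cross a b))
    by (field; lra).
  apply Rmult_lt_0_compat; lra.
Qed.

(** ** The pointwise identity along Gamma
    Arguments: a = X_x, b = X_t, p = X_xx, q = X_xt, r = X_tt, w = X_xxt = X_xtx. *)

(** dL/dt at a point where L = 0 (the derivative of |C| does not contribute). *)
Definition sfL_rate (a b p q r w : V3) : R :=
  (dot w (cross a b) + dot p (vplus (cross q b) (cross a r))) / vnorm (cross a b).

(** d/dx of Phi = ln |D| - ln E with D = <q, a x b> and E = <a, a>. *)
Definition potential_rate (a b p q w : V3) : R :=
  (dot w (cross a b) + dot q (vplus (cross p b) (cross a q))) / dot q (cross a b)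
  - 2 * dot p a / dot a a.

Definition curvature_integrand (a b p q r : V3) : R :=
  geod_curv a p (unormal a b) * kn_perp a b p q r * / sqrt (Rabs (gaussK a b p q r)) * vnorm a.

(** The polynomial identity behind the theorem, with C = a x b, D = <q,C>,
    E = <a,a>, F = <a,b>, G = <b,b>, S = |C|^2; Lt and Dx are the numerators
    of [sfL_rate] and of the first term of [potential_rate], Kg and Nr those
    of k_g and N.  The right-hand side is a multiple of <p, C>, which
    vanishes on an asymptotic curve. *)
Lemma polynomial_identity (a b p q r w : V3) :
  let C := cross a b in
  let D := dot q C in let E := dot a a in let S := dot C C in
  let F := dot a b in let G := dot b b in
  let Lt := dot w C + dot p (vplus (cross q b) (cross a r)) in
  let Dx := dot w C + dot q (vplus (cross p b) (cross a q)) in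
  let Kg := dot p (cross C a) in let Nr := dot r C in
  Lt*E*S - Dx*E*S + 2*dot p a*D*S + Kg*(Nr*E - 2*D*F) =
  E*(2*(G*dot q a - F*dot q b) + E*dot r b - F*dot r a) * dot p C.
Proof.
  destruct a as [[a1 a2] a3], b as [[b1 b2] b3], p as [[p1 p2] p3], q as [[q1 q2] q3],
    r as [[r1 r2] r3], w as [[w1 w2] w3].
  unfold dot, cross, vplus, mkV, vx, vy, vz; simpl. ring.
Qed.

Section CurvaturesOnGamma.
Variables a b p q r : V3.
Let C := cross a b.
Let D := dot q C.
Let E := dot a a.
Let F := dot a b.
Let S := dot C C.
Hypothesis HC : C <> vzero.
Hypothesis HL : dot p C = 0.

Lemma geod_curv_eq : geod_curv a p (unormal a b) = dot p (cross C a) / (vnorm C * (vnorm a * E)).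
Proof.
  pose proof (ffE_pos _ _ HC) as HE. pose proof (vnorm_cross_pos _ _ HC) as Hsc.
  assert (Hsa : vnorm a * vnorm a = E) by (apply sqrt_sqrt; unfold E; lra).
  assert (0 < vnorm a) by (apply sqrt_lt_R0; exact HE).
  fold C in Hsc. unfold geod_curv, unormal. rewrite dot_cross_scal. fold C.
  rewrite <- Hsa. field. lra.
Qed.

Lemma kn_perp_eq : kn_perp a b p q r = (dot r C * E - 2 * D * F) / (vnorm C * S).
Proof.
  pose proof (ffE_pos _ _ HC) as HE. pose proof (vnorm_cross_pos _ _ HC) as Hsc.
  pose proof (dot_pos _ HC) as HS. pose proof (lagrange a b) as HSl.
  unfold kn_perp, normal_curv, ffE, ffF, ffG. rewrite (sfL_eq a b p), (sfM_eq a b q).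
  unfold sfN, unormal. rewrite dot_scal_r. fold C D E F S. rewrite HL.
  fold C in Hsc, HSl. fold S E F in HSl. fold E in HE. fold S in HS.
  replace (E * (- F) ^ 2 + 2 * F * - F * E + dot b b * E ^ 2) with (E * S) by (rewrite HSl; ring).
  field; lra.
Qed.

Lemma inv_sqrt_abs_K_eq sgn : sgn ^ 2 = 1 -> 0 < sgn * D ->
  / sqrt (Rabs (gaussK a b p q r)) = S / (sgn * D).
Proof.
  intros Hs2 HsD. pose proof (dot_pos _ HC) as HS. pose proof (lagrange a b) as HSl.
  pose proof (vnorm_cross_pos _ _ HC) as Hsc. fold C in Hsc, HSl. fold S in HS, HSl.
  assert (Hsc2 : vnorm C * vnorm C = S) by (apply sqrt_sqrt, Rlt_le, HS).
  unfold gaussK, ffE, ffF, ffG. rewrite (sfL_eq a b p), (sfM_eq a b q). fold C D.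
  rewrite HL, <- HSl.
  replace ((0 * / vnorm C * sfN a b r - (D * / vnorm C) ^ 2) / S) with (- ((sgn * D / S) ^ 2)).
  2:{ rewrite <- Hsc2. field_simplify; [|lra..]. rewrite Hs2. field. lra. }
  rewrite Rabs_Ropp, Rabs_right by (apply Rle_ge, pow2_ge_0).
  rewrite sqrt_pow2 by (apply Rlt_le, Rdiv_lt_0_compat; lra).
  apply Rinv_div.
Qed.

End CurvaturesOnGamma.

Lemma integrand_identity a b p q r w sgn :
  cross a b <> vzero -> dot p (cross a b) = 0 -> sgn ^ 2 = 1 -> 0 < sgn * dot q (cross a b) ->
  / sfM a b q * sfL_rate a b p q r w
  = potential_rate a b p q w - sgn * curvature_integrand a b p q r.
Proof.
  intros HC HL Hs2 HsD.
  unfold curvature_integrand.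
  rewrite geod_curv_eq, kn_perp_eq, (inv_sqrt_abs_K_eq _ _ _ _ _ HC HL sgn), sfM_eq by auto.
  unfold sfL_rate, potential_rate.
  pose proof (polynomial_identity a b p q r w) as Hpoly. cbv zeta in Hpoly.
  rewrite HL, Rmult_0_r in Hpoly.
  set (C := cross a b) in *. set (D := dot q C) in *. set (E := dot a a) in *.
  set (S := dot C C) in *. set (F := dot a b) in *.
  set (Lt := dot w C + dot p (vplus (cross q b) (cross a r))) in *.
  set (Dx := dot w C + dot q (vplus (cross p b) (cross a q))) in *.
  set (Kg := dot p (cross C a)) in *. set (Nr := dot r C) in *.
  pose proof (ffE_pos _ _ HC) as HE. pose proof (dot_pos _ HC) as HS.
  pose proof (vnorm_cross_pos _ _ HC) as Hsc. fold C E S in HE, HS, Hsc.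
  assert (Hsc2 : vnorm C * vnorm C = S) by (apply sqrt_sqrt, Rlt_le, HS).
  assert (Hsa : 0 < vnorm a) by (apply sqrt_lt_R0; exact HE).
  assert (HD : D <> 0) by (intro Hz; rewrite Hz, Rmult_0_r in HsD; lra).
  assert (Hsgn : sgn <> 0) by (intro Hz; rewrite Hz, Rmult_0_l in HsD; lra).
  (* the curvature term, with |C|^2 replaced by S *)
  assert (Hcurv : sgn * (Kg / (vnorm C * (vnorm a * E)) * ((Nr * E - 2 * D * F) / (vnorm C * S))
                   * (S / (sgn * D)) * vnorm a)
                  = Kg * (Nr * E - 2 * D * F) / (S * E * D)).
  { rewrite <- Hsc2 at 2. field. repeat split; lra. }
  rewrite Hcurv. apply Rminus_diag_uniq.
  replace (/ (D * / vnorm C) * (Lt / vnorm C) - (Dx / D - 2 * dot p a / E - Kg * (Nr * E - 2 * D * F) / (S * E * D)))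
    with ((Lt*E*S - Dx*E*S + 2*dot p a*D*S + Kg*(Nr*E - 2*D*F)) / (D * E * S))
    by (field; repeat split; lra).
  rewrite Hpoly. unfold Rdiv. ring.
Qed.

(** At a point where L = <P, A x B>/|A x B| vanishes, its derivative is
    [sfL_rate]: the derivative of the normalising factor |A x B| gets
    multiplied by <P, A x B> = 0. *)
Lemma sfL_deriv_where_zero (A B P : R -> V3) x qa rb wp :
  dvec A x qa -> dvec B x rb -> dvec P x wp ->
  cross (A x) (B x) <> vzero -> dot (P x) (cross (A x) (B x)) = 0 ->
  derivable_pt_lim (fun s => sfL (A s) (B s) (P s)) x (sfL_rate (A x) (B x) (P x) qa rb wp).
Proof.
  intros HA HB HP HC Hz.
  assert (HS := dot_pos _ HC). assert (Hn := vnorm_cross_pos _ _ HC).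
  assert (HCd := dvec_cross _ _ _ _ _ HA HB).
  replace (fun s => sfL (A s) (B s) (P s))
    with (fun s => dot (P s) (cross (A s) (B s)) * / vnorm (cross (A s) (B s)))
    by (apply functional_extensionality; intros s; symmetry; apply sfL_eq).
  eapply D_eq.
  - apply D_mult; [apply dvec_dot; eauto|].
    apply D_inv; [unfold vnorm; apply D_sqrt; [apply dvec_dot; eauto|exact HS]|lra].
  - cbv beta. rewrite Hz. unfold sfL_rate, Rdiv. ring.
Qed.

Lemma sfL_deriv_at_boundary t0 (A B P : R -> V3) qa rb wp l : 0 < t0 ->
  dvec_in t0 A qa -> dvec_in t0 B rb -> dvec_in t0 P wp ->
  cross (A 0) (B 0) <> vzero -> dot (P 0) (cross (A 0) (B 0)) = 0 ->
  deriv_in (tdom t0) (fun s => sfL (A s) (B s) (P s)) 0 l ->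
  l = sfL_rate (A 0) (B 0) (P 0) qa rb wp.
Proof.
  intros Ht HA HB HP HC Hz Hl.
  pose proof (extend_left_v_eq A qa 0 (Rle_refl 0)) as EA.
  pose proof (extend_left_v_eq B rb 0 (Rle_refl 0)) as EB.
  pose proof (extend_left_v_eq P wp 0 (Rle_refl 0)) as EP.
  pose proof (sfL_deriv_where_zero _ _ _ 0 _ _ _ (extend_left_v_deriv _ _ _ Ht HA)
    (extend_left_v_deriv _ _ _ Ht HB) (extend_left_v_deriv _ _ _ Ht HP)) as Hd.
  rewrite EA, EB, EP in Hd. specialize (Hd HC Hz).
  eapply deriv_in_uniq; [|exact Hl|]; [split; lra|].
  eapply deriv_in_of_derivable; [exact Ht|exact Hd|]. intros s [Hs _].
  rewrite !extend_left_v_eq by exact Hs. reflexivity.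
Qed.

(** ** The logarithmic potential Phi = ln |D| - ln E along Gamma *)

Lemma constant_sign g : continuity g -> (forall y, g y <> 0) -> 0 < g 0 ->
  forall y, 0 <= y -> 0 < g y.
Proof.
  intros Hc Hn H0 y Hy. destruct (Rlt_or_le 0 (g y)) as [|Hle]; auto. exfalso.
  assert (Hlt : g y < 0) by (destruct Hle; auto; exfalso; apply (Hn y); auto).
  destruct Hy as [Hy|Hy]; [|subst; lra].
  destruct (IVT (fun z => - g z) 0 y) as [z [_ Hz]]; [apply continuity_opp; auto|lra|lra|lra|].
  apply (Hn z). lra.
Qed.

(** Phi = ln |D| - ln E, written with ln (D^2)/2 to avoid |.|. *)
Definition log_potential (a b q : V3) : R :=
  / 2 * ln (dot q (cross a b) * dot q (cross a b)) - ln (dot a a).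

(** The frame along Gamma as functions of x: a = X_x, b = X_t, q = X_xt with
    x-derivatives p = X_xx, q = X_tx and w = X_xtx; regular, with D <> 0. *)
Section LogPotential.
Variables a b p q w : R -> V3.
Hypothesis Ha : forall y, dvec a y (p y).
Hypothesis Hb : forall y, dvec b y (q y).
Hypothesis Hq : forall y, dvec q y (w y).
Hypothesis HC : forall y, cross (a y) (b y) <> vzero.
Hypothesis HD : forall y, dot (q y) (cross (a y) (b y)) <> 0.

Lemma frame_det_deriv y : derivable_pt_lim (fun z => dot (q z) (cross (a z) (b z))) y
  (dot (w y) (cross (a y) (b y)) + dot (q y) (vplus (cross (p y) (b y)) (cross (a y) (q y)))).
Proof. apply dvec_dot; [apply Hq|apply dvec_cross; [apply Ha|apply Hb]]. Qed.

Lemma frame_det_sign sgn : sgn ^ 2 = 1 -> 0 < sgn * dot (q 0) (cross (a 0) (b 0)) ->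
  forall y, 0 <= y -> 0 < sgn * dot (q y) (cross (a y) (b y)).
Proof.
  intros Hs2 H0. apply (constant_sign (fun y => sgn * dot (q y) (cross (a y) (b y)))); auto.
  - intros y. apply C_mult; [apply C_const|].
    apply derivable_continuous_pt. eexists. apply frame_det_deriv.
  - intros y Hz. apply Rmult_integral in Hz as [Hz|Hz]; [|exact (HD y Hz)].
    rewrite Hz in Hs2. lra.
Qed.

Lemma log_potential_deriv y :
  derivable_pt_lim (fun z => log_potential (a z) (b z) (q z)) y
    (potential_rate (a y) (b y) (p y) (q y) (w y)).
Proof.
  pose proof (HD y) as HDy. pose proof (ffE_pos _ _ (HC y)) as HE.
  unfold log_potential, potential_rate. eapply D_eq.
  - apply D_minus.
    + apply D_scal. apply D_ln; [apply D_mult; apply frame_det_deriv|].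
      assert (0 < dot (q y) (cross (a y) (b y)) ^ 2) by (apply pow2_gt_0; exact HDy).
      simpl in *; lra.
    + apply D_ln; [apply dvec_dot; apply Ha|exact HE].
  - rewrite (dot_comm (a y) (p y)). field. split; [lra|exact HDy].
Qed.

Lemma potential_rate_continuous (Hp : forall y, cvec p y) (Hw : forall y, cvec w y) y :
  continuity_pt (fun z => potential_rate (a z) (b z) (p z) (q z) (w z)) y.
Proof.
  assert (ca : forall y, cvec a y) by (intros; eapply dvec_cvec; apply Ha).
  assert (cb : forall y, cvec b y) by (intros; eapply dvec_cvec; apply Hb).
  assert (cq : forall y, cvec q y) by (intros; eapply dvec_cvec; apply Hq).
  unfold potential_rate. apply C_minus.
  - apply C_div; [apply C_plus| |apply HD].
    + apply cvec_dot; [apply Hw|apply cvec_cross; auto].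
    + apply cvec_dot; [apply cq|apply cvec_vplus; apply cvec_cross; auto].
    + apply cvec_dot; [apply cq|apply cvec_cross; auto].
  - apply C_div; [apply C_mult; [apply C_const|apply cvec_dot; auto]|apply cvec_dot; auto|].
    apply Rgt_not_eq, (ffE_pos _ _ (HC y)).
Qed.

Lemma potential_rate_integral x0 (Hp : forall y, cvec p y) (Hw : forall y, cvec w y) :
  a x0 = a 0 -> b x0 = b 0 -> q x0 = q 0 ->
  is_RInt (fun y => potential_rate (a y) (b y) (p y) (q y) (w y)) 0 x0 0.
Proof.
  intros Pa Pb Pq.
  pose proof (is_RInt_derive (fun z => log_potential (a z) (b z) (q z))
    (fun y => potential_rate (a y) (b y) (p y) (q y) (w y)) 0 x0) as H.
  cbv beta in H. rewrite Pa, Pb, Pq, minus_eq_zero in H. apply H.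
  - intros y _. apply is_derive_Reals, log_potential_deriv.
  - intros y _. apply continuity_pt_filterlim, potential_rate_continuous; auto.
Qed.

End LogPotential.

Lemma RiemannInt_of_pointwise_identity (f1 f2 phi : R -> R) a b sgn
  (pr1 : Riemann_integrable f1 a b) (pr2 : Riemann_integrable f2 a b) :
  a <= b -> is_RInt phi a b 0 ->
  (forall y, a <= y <= b -> f1 y = phi y - sgn * f2 y) ->
  RiemannInt pr1 = - sgn * RiemannInt pr2.
Proof.
  intros Hab Hphi Heq. rewrite <- !RInt_Reals.
  apply is_RInt_unique.
  apply is_RInt_ext with (fun y => phi y - sgn * f2 y).
  { intros y Hy. rewrite Rmin_left, Rmax_right in Hy by lra. symmetry; apply Heq; lra. }
  assert (H2 : is_RInt f2 a b (RInt f2 a b)) by exact (RInt_correct f2 a b (ex_RInt_Reals_1 _ _ _ pr2)).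
  pose proof (is_RInt_minus _ _ _ _ _ _ Hphi (is_RInt_scal _ _ _ sgn _ H2)) as H.
  replace (- sgn * RInt f2 a b) with (minus 0 (Hierarchy.scal sgn (RInt f2 a b))); [exact H|].
  unfold minus, plus, opp, Hierarchy.scal; simpl. unfold mult; simpl. ring.
Qed.

Lemma boundary_regularity t0 (X Xx Xt Xxx Xxt Xtt : R -> R -> V3) : 0 < t0 ->
  Ck_v 3 t0 X -> is_px_v t0 X Xx -> is_pt_v t0 X Xt ->
  is_px_v t0 Xx Xxx -> is_pt_v t0 Xx Xxt -> is_pt_v t0 Xt Xtt ->
  (forall y, cvec (fun z => Xxx z 0) y) /\ (forall y, dvec (fun z => Xt z 0) y (Xxt y 0)) /\
  exists w, (forall y, cvec w y) /\ (forall y, dvec (fun z => Xxt z 0) y (w y)) /\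
    (forall y, dvec_in t0 (fun s => Xxx y s) (w y)).
Proof.
  intros Ht0 [C1 [C2 C3]] [Hx1 [Hx2 Hx3]] [Ht1 [Ht2 Ht3]] [Hxx1 [Hxx2 Hxx3]]
    [Hxt1 [Hxt2 Hxt3]] [Htt1 [Htt2 Htt3]].
  destruct (boundary_partials _ _ _ _ _ _ _ Ht0 C1 Hx1 Ht1 Hxx1 Hxt1 Htt1) as [Cp1 [Ex1 [g1 [Cg1 [Dg1 Tg1]]]]].
  destruct (boundary_partials _ _ _ _ _ _ _ Ht0 C2 Hx2 Ht2 Hxx2 Hxt2 Htt2) as [Cp2 [Ex2 [g2 [Cg2 [Dg2 Tg2]]]]].
  destruct (boundary_partials _ _ _ _ _ _ _ Ht0 C3 Hx3 Ht3 Hxx3 Hxt3 Htt3) as [Cp3 [Ex3 [g3 [Cg3 [Dg3 Tg3]]]]].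
  split; [intros y; repeat split; auto|]. split; [intros y; repeat split; auto|].
  exists (fun y => mkV (g1 y) (g2 y) (g3 y)). repeat split; auto.
Qed.

Theorem mainTheorem6
  (x0 t0 : R) (Hx0 : 0 < x0) (Ht0 : 0 < t0)
  (X Xx Xt Xxx Xxt Xtt : R -> R -> V3)
  (* C^3 parametrization of the surface near Gamma on R x [0,t0) *)
  (HC3 : Ck_v 3 t0 X)
  (* its partial derivatives *)
  (HXx : is_px_v t0 X Xx) (HXt : is_pt_v t0 X Xt)
  (HXxx : is_px_v t0 Xx Xxx) (HXxt : is_pt_v t0 Xx Xxt) (HXtt : is_pt_v t0 Xt Xtt)
  (* periodic in x with period x0 *)
  (Hper : forall x t, tdom t0 t -> X (x + x0) t = X x t)
  (* coordinate system: injective on [0,x0) x [0,t0) and regular *)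
  (Hinj : forall x x' t t', 0 <= x < x0 -> 0 <= x' < x0 -> tdom t0 t -> tdom t0 t' ->
            X x t = X x' t' -> x = x' /\ t = t')
  (Hreg : forall x t, tdom t0 t -> cross (Xx x t) (Xt x t) <> vzero)
  (* Gamma(x) = X(x,0) is an asymptotic curve: zero normal curvature in its
     tangent direction X_x *)
  (Hasym : forall x, normal_curv (Xx x 0) (Xt x 0) (Xxx x 0) (Xxt x 0) (Xtt x 0) 1 0 = 0)
  (* Gamma lies in {K < 0} *)
  (HK : forall x, gaussK (Xx x 0) (Xt x 0) (Xxx x 0) (Xxt x 0) (Xtt x 0) < 0)
  (* dL x = d/dt L(x,t) at t = 0 (one-sided) *)
  (dL : R -> R)
  (HdL : forall x, deriv_in (tdom t0)
           (fun s => sfL (Xx x s) (Xt x s) (Xxx x s)) 0 (dL x)) :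
  forall (pr1 : Riemann_integrable
                  (fun x => / sfM (Xx x 0) (Xt x 0) (Xxt x 0) * dL x) 0 x0)
         (pr2 : Riemann_integrable
                  (fun x => geod_curv (Xx x 0) (Xxx x 0) (unormal (Xx x 0) (Xt x 0))
                            * kn_perp (Xx x 0) (Xt x 0) (Xxx x 0) (Xxt x 0) (Xtt x 0)
                            * / sqrt (Rabs (gaussK (Xx x 0) (Xt x 0) (Xxx x 0) (Xxt x 0) (Xtt x 0)))
                            * vnorm (Xx x 0)) 0 x0),
    (0 < sfM (Xx 0 0) (Xt 0 0) (Xxt 0 0) -> RiemannInt pr1 = - RiemannInt pr2) /\
    (sfM (Xx 0 0) (Xt 0 0) (Xxt 0 0) < 0 -> RiemannInt pr1 = RiemannInt pr2).
Proof.
  intros pr1 pr2.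
  assert (Hd0 : tdom t0 0) by (split; lra).
  destruct (boundary_regularity _ _ _ _ _ _ _ Ht0 HC3 HXx HXt HXxx HXxt HXtt)
    as (Hp & Hb & w & Hw & Hq & Hwt).
  assert (Ha : forall y, dvec (fun z => Xx z 0) y (Xxx y 0))
    by (intros y; destruct HXxx as (H1 & H2 & H3); repeat split; auto).
  assert (HC : forall y, cross (Xx y 0) (Xt y 0) <> vzero) by (intros; apply Hreg, Hd0).
  assert (HL : forall y, dot (Xxx y 0) (cross (Xx y 0) (Xt y 0)) = 0)
    by (intros; eapply asymptotic_L_zero; eauto).
  assert (HD : forall y, dot (Xxt y 0) (cross (Xx y 0) (Xt y 0)) <> 0)
    by (intros; eapply negative_K_M_nonzero; eauto).
  assert (HdLf : forall y, dL y = sfL_rate (Xx y 0) (Xt y 0) (Xxx y 0) (Xxt y 0) (Xtt y 0) (w y))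
    by (intros y; eapply sfL_deriv_at_boundary; eauto using is_pt_v_boundary).
  destruct (periodic_boundary_frame _ _ _ _ _ _ Ht0 Hper HXx HXt HXxt) as (Pa & Pb & Pq).
  assert (Hpot := potential_rate_integral _ _ _ _ _ Ha Hb Hq HC HD x0 Hp Hw Pa Pb Pq).
  assert (Hkey : forall sgn, sgn ^ 2 = 1 -> 0 < sgn * sfM (Xx 0 0) (Xt 0 0) (Xxt 0 0) ->
                   RiemannInt pr1 = - sgn * RiemannInt pr2).
  { intros sgn Hs2 HsM.
    pose proof (frame_det_sign _ _ _ _ w Ha Hb Hq HD sgn Hs2 (sign_sfM _ _ _ _ (HC 0) HsM)) as Hsign.
    eapply RiemannInt_of_pointwise_identity; [lra|exact Hpot|].
    intros y Hy. rewrite HdLf. apply integrand_identity; auto. apply Hsign; lra. }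
  split; intros HM.
  - rewrite (Hkey 1); [ring|ring|lra].
  - rewrite (Hkey (-1)); [ring|ring|lra].
Qed.
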